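(* Under the same setting as follows: let $\Sigma \subset \mathbb{R}^N$ be proximinal, $A \in \mathbb{R}^{m\times N}$, $\hat{x} \in \Sigma$, $e \in \mathbb{R}^m$, $y = A\hat{x}+e$, $\mu>0$, $\lambda \in [0,1]$, $\eta \ge 0$, and $P_\Sigma$ a generalized projection onto $\Sigma$ with $\beta = \beta_\Sigma(P_\Sigma) < \infty$ such that for every $z$ and every $u \in P_\Sigma(z)$ there is $w \in P^\perp_\Sigma(z)$ with $\|u-w\|_2 \le \eta$. Let $\delta = \delta_\Sigma(\mu A^TA)$. For any $x \in \mathbb{R}^N$, any $p \in P_\Sigma(x)$, $z = (1-\lambda)x + \lambda p$ and $x^+ = z - \mu A^T(Az - y)$, we have $$\|x^+ - \hat{x}\|_2 \le \big(\delta\beta + |1-\lambda|\,\|I-\mu A^TA\|_{\mathrm{op}}\big)\|x - \hat{x}\|_2 + |1-\lambda|\,\|I-\mu A^TA\|_{\mathrm{op}}\,\eta + \mu\|A^Te\|_2.$$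
   Context: Secant set: $\Sigma - \Sigma = \{x_1 - x_2 : x_1, x_2 \in \Sigma\}$. Restricted isometry constant: for a matrix $B \in \mathbb{R}^{N\times N}$, $\delta_\Sigma(B)$ is the smallest $\delta \ge 0$ such that $\|(I-B)(x_1-x_2)\|_2 \le \delta\|x_1-x_2\|_2$ for all $x_1,x_2 \in \Sigma$. A generalized projection onto $\Sigma$ is a (set-valued) map $P$ with $P(z) \subset \Sigma$ (nonempty) for every $z \in \mathbb{R}^N$. $\Sigma$ is proximinal if $\arg\min_{x\in\Sigma}\|x-z\|_2 \neq \emptyset$ for all $z$, and then the orthogonal projection is the set-valued map $P^\perp_\Sigma(z) = \arg\min_{x\in\Sigma}\|x-z\|_2$. Restricted Lipschitz constant: $\beta_\Sigma(P)$ is the smallest $\beta$ such that $\|u - x\|_2 \le \beta\|z - x\|_2$ for all $z \in \mathbb{R}^N$, $x \in \Sigma$, $u \in P(z)$. $\|\cdot\|_{\mathrm{op}}$ is the operator norm induced by $\|\cdot\|_2$. *)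

From HB Require Import structures.
From mathcomp Require Import all_boot all_order all_algebra.
From mathcomp Require Import classical_sets reals.
Set Implicit Arguments. Unset Strict Implicit. Unset Printing Implicit Defensive.
Import Order.TTheory GRing.Theory Num.Theory.
Local Open Scope ring_scope.
Local Open Scope classical_set_scope.

Section Defs.
Variable R : realType.

Definition norm2 (n : nat) (v : 'cV[R]_n) : R :=
  Num.sqrt (\sum_(i < n) (v i 0) ^+ 2).

Definition opnorm (n : nat) (M : 'M[R]_n) : R :=
  sup [set norm2 (M *m x) | x in [set x : 'cV[R]_n | norm2 x <= 1]].

Definition rip_ok (n : nat) (Sigma : set 'cV[R]_n) (B : 'M[R]_n) (d : R) : Prop :=
  0 <= d /\ forall x1 x2, Sigma x1 -> Sigma x2 ->
    norm2 ((1%:M - B) *m (x1 - x2)) <= d * norm2 (x1 - x2).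
Definition rip_const (n : nat) (Sigma : set 'cV[R]_n) (B : 'M[R]_n) : R :=
  inf [set d | rip_ok Sigma B d].

Definition gen_proj (n : nat) (Sigma : set 'cV[R]_n) (P : 'cV[R]_n -> set 'cV[R]_n) : Prop :=
  forall z, P z `<=` Sigma /\ P z !=set0.

Definition orth_proj (n : nat) (Sigma : set 'cV[R]_n) (z : 'cV[R]_n) : set 'cV[R]_n :=
  [set x | Sigma x /\ forall y, Sigma y -> norm2 (x - z) <= norm2 (y - z)].

Definition proximinal (n : nat) (Sigma : set 'cV[R]_n) : Prop :=
  forall z, orth_proj Sigma z !=set0.

Definition rlip_ok (n : nat) (Sigma : set 'cV[R]_n) (P : 'cV[R]_n -> set 'cV[R]_n) (b : R) : Prop :=
  forall z x u, Sigma x -> P z u -> norm2 (u - x) <= b * norm2 (z - x).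
Definition rlip_const (n : nat) (Sigma : set 'cV[R]_n) (P : 'cV[R]_n -> set 'cV[R]_n) : R :=
  inf [set b | rlip_ok Sigma P b].

End Defs.

(* The relaxed step splits as
     x+ - xhat = (I - B)(p - xhat) + (1 - lam) (I - B)(x - p) + mu A^T e,   B = mu A^T A.
   Since p and xhat lie in Sigma, the first term is at most delta ||p - xhat||, and
   ||p - xhat|| <= beta ||x - xhat||.  The second is at most ||I - B||_op ||x - p||,
   and ||x - p|| <= ||x - w|| + ||w - p|| <= ||x - xhat|| + eta for a best
   approximation w of x that is eta-close to p. *)
From HB Require Import structures.
From mathcomp Require Import all_boot all_order all_algebra.
From mathcomp Require Import classical_sets reals.
From mathcomp Require Import ring lra.
Import Order.TTheory GRing.Theory Num.Theory.
Local Open Scope ring_scope.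
Local Open Scope classical_set_scope.

Set Implicit Arguments. Unset Strict Implicit.

Lemma cauchy_schwarz (R : realFieldType) n (a b : 'I_n -> R) :
  (\sum_i a i * b i) ^+ 2 <= (\sum_i a i ^+ 2) * (\sum_i b i ^+ 2).
Proof.
have lagrange : \sum_i \sum_j (a i * b j - a j * b i) ^+ 2 =
    ((\sum_i a i ^+ 2) * (\sum_i b i ^+ 2) - (\sum_i a i * b i) ^+ 2) *+ 2.
  rewrite mulr2n expr2 !big_distrlr /= [in X in _ = _ + X]exchange_big /=.
  rewrite -!sumrB -big_split /=; apply: eq_bigr => i _.
  by rewrite -!sumrB -big_split; apply: eq_bigr => j _ /=; ring.
rewrite -subr_ge0 -(pmulrn_lge0 _ (ltn0Sn 1)) -lagrange.
by do 2!apply: sumr_ge0 => ? _; exact: sqr_ge0.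
Qed.

Lemma ler_inf_mulr (R : realType) (S : set R) c s :
  S !=set0 -> 0 <= s -> (forall d, S d -> c <= d * s) -> c <= inf S * s.
Proof.
move=> [d0 Sd0] s_ge0 cS.
have [s0|s_neq0] := eqVneq s 0; first by move: (cS d0 Sd0); rewrite s0 !mulr0.
have s_gt0 : 0 < s by rewrite lt0r s_neq0.
rewrite -ler_pdivrMr //; apply: lb_le_inf; first by exists d0.
by move=> d Sd; rewrite ler_pdivrMr //; exact: cS.
Qed.

Section Norm2.
Variable R : realType.
Implicit Types n : nat.

Lemma sum_sqr_ge0 n (f : 'I_n -> R) : 0 <= \sum_i f i ^+ 2.
Proof. by apply: sumr_ge0 => i _; exact: sqr_ge0. Qed.

Lemma norm2_ge0 n (v : 'cV[R]_n) : 0 <= norm2 v.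
Proof. exact: sqrtr_ge0. Qed.

Lemma norm2_0 n : norm2 (0 : 'cV[R]_n) = 0.
Proof. by rewrite /norm2 big1 ?sqrtr0 // => i _; rewrite mxE expr0n. Qed.

Lemma norm2_sqr n (v : 'cV[R]_n) : norm2 v ^+ 2 = \sum_i v i 0 ^+ 2.
Proof. by rewrite sqr_sqrtr // sum_sqr_ge0. Qed.

Lemma norm2Z n c (v : 'cV[R]_n) : norm2 (c *: v) = `|c| * norm2 v.
Proof.
rewrite /norm2; under eq_bigr => i _ do rewrite mxE exprMn.
by rewrite -mulr_sumr sqrtrM ?sqr_ge0 // sqrtr_sqr.
Qed.

Lemma norm2_distC n (u v : 'cV[R]_n) : norm2 (u - v) = norm2 (v - u).
Proof. by rewrite -opprB -scaleN1r norm2Z normrN normr1 mul1r. Qed.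

Lemma norm2D n (u v : 'cV[R]_n) : norm2 (u + v) <= norm2 u + norm2 v.
Proof.
rewrite -ler_sqr ?nnegrE ?addr_ge0 ?norm2_ge0 // sqrrD !norm2_sqr.
have -> : \sum_i (u + v) i 0 ^+ 2 =
    \sum_i u i 0 ^+ 2 + (\sum_i u i 0 * v i 0) *+ 2 + \sum_i v i 0 ^+ 2.
  rewrite -sumrMnl -!big_split /=; apply: eq_bigr => i _; rewrite mxE; ring.
rewrite lerD2r lerD2l lerMn2r /= (le_trans (ler_norm _)) //.
rewrite -sqrtr_sqr /norm2 -sqrtrM ?sum_sqr_ge0 // ler_sqrt.
  exact: cauchy_schwarz.
by rewrite mulr_ge0 ?sum_sqr_ge0.
Qed.

Definition frobenius k n (M : 'M[R]_(k, n)) : R :=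
  Num.sqrt (\sum_i \sum_j M i j ^+ 2).

Lemma norm2_mulmx_frobenius k n (M : 'M[R]_(k, n)) (v : 'cV[R]_n) :
  norm2 (M *m v) <= frobenius M * norm2 v.
Proof.
have frob_ge0 : 0 <= \sum_i \sum_j M i j ^+ 2.
  by apply: sumr_ge0 => i _; exact: sum_sqr_ge0.
rewrite /norm2 /frobenius -sqrtrM // ler_sqrt; last by rewrite mulr_ge0 ?sum_sqr_ge0.
by rewrite mulr_suml; apply: ler_sum => i _; rewrite mxE; exact: cauchy_schwarz.
Qed.

Lemma opnorm_has_sup n (M : 'M[R]_n) :
  has_sup [set norm2 (M *m x) | x in [set x : 'cV[R]_n | norm2 x <= 1]].
Proof.
split; first by exists (norm2 (M *m 0)), 0 => //=; rewrite norm2_0.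
exists (frobenius M) => _ [x /= x_le1 <-].
apply: le_trans (norm2_mulmx_frobenius M x) _.
by rewrite -[leRHS]mulr1 ler_wpM2l // sqrtr_ge0.
Qed.

Lemma norm2_mulmx_opnorm n (M : 'M[R]_n) (v : 'cV[R]_n) :
  norm2 (M *m v) <= opnorm M * norm2 v.
Proof.
have [v0|v_neq0] := eqVneq (norm2 v) 0.
  by have := norm2_mulmx_frobenius M v; rewrite v0 !mulr0.
have v_gt0 : 0 < norm2 v by rewrite lt0r v_neq0 norm2_ge0.
have : norm2 (M *m ((norm2 v)^-1 *: v)) <= opnorm M.
  apply: sup_upper_bound; first exact: opnorm_has_sup.
  exists ((norm2 v)^-1 *: v) => //=.
  by rewrite norm2Z ger0_norm ?invr_ge0 ?norm2_ge0 // mulVf.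
rewrite -scalemxAr norm2Z ger0_norm ?invr_ge0 ?norm2_ge0 //.
by rewrite ler_pdivrMl // mulrC.
Qed.

Lemma opnorm_ge0 n (M : 'M[R]_n) : 0 <= opnorm M.
Proof.
apply: le_trans (norm2_ge0 (M *m 0)) _.
apply: sup_upper_bound; first exact: opnorm_has_sup.
by exists 0 => //=; rewrite norm2_0.
Qed.

End Norm2.

Section Projections.
Variables (R : realType) (n : nat) (Sigma : set 'cV[R]_n).

Lemma rip_ok_opnorm (B : 'M[R]_n) : rip_ok Sigma B (opnorm (1%:M - B)).
Proof. by split=> [|x1 x2 _ _]; [exact: opnorm_ge0 | exact: norm2_mulmx_opnorm]. Qed.

Lemma rip_const_ge0 (B : 'M[R]_n) : 0 <= rip_const Sigma B.
Proof.
apply: lb_le_inf => [|d []//].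
by exists (opnorm (1%:M - B)); exact: rip_ok_opnorm.
Qed.

Lemma rip_const_bound (B : 'M[R]_n) x1 x2 : Sigma x1 -> Sigma x2 ->
  norm2 ((1%:M - B) *m (x1 - x2)) <= rip_const Sigma B * norm2 (x1 - x2).
Proof.
move=> Sx1 Sx2; apply: ler_inf_mulr => [||d [_]]; last exact.
- by exists (opnorm (1%:M - B)); exact: rip_ok_opnorm.
- exact: norm2_ge0.
Qed.

Lemma rlip_const_bound (P : 'cV[R]_n -> set 'cV[R]_n) z x u :
  (exists b, rlip_ok Sigma P b) -> Sigma x -> P z u ->
  norm2 (u - x) <= rlip_const Sigma P * norm2 (z - x).
Proof.
move=> lipP Sx Pzu; apply: ler_inf_mulr => [//||b]; first exact: norm2_ge0.
by move/(_ z x u Sx Pzu).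
Qed.

Lemma orth_proj_dist_le z w s p : orth_proj Sigma z w -> Sigma s ->
  norm2 (z - p) <= norm2 (z - s) + norm2 (w - p).
Proof.
move=> [_ w_min] Ss; have -> : z - p = (z - w) + (w - p) by rewrite addrA subrK.
apply: le_trans (norm2D _ _) _; rewrite lerD2r.
by rewrite norm2_distC [norm2 (z - s)]norm2_distC; exact: w_min.
Qed.

End Projections.

Lemma relaxed_step_decomp (R : realType) N m (A : 'M[R]_(m, N))
    (xhat x p : 'cV[R]_N) (e : 'cV[R]_m) mu lam :
  let B := mu *: (A^T *m A) in
  let z := (1 - lam) *: x + lam *: p in
  z - mu *: (A^T *m (A *m z - (A *m xhat + e))) - xhat =
  (1%:M - B) *m (p - xhat) + (1 - lam) *: ((1%:M - B) *m (x - p)) + mu *: (A^T *m e).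
Proof.
rewrite /= !mulmxBl !mul1mx -!scalemxAl !(mulmxDr, mulmxBr, mulmxN) -!scalemxAr !mulmxA.
move: (A^T *m A *m x) (A^T *m A *m p) (A^T *m A *m xhat) (A^T *m e) => Cx Cp Cxhat Ce.
by apply/matrixP => i j; rewrite !mxE; ring.
Qed.

Theorem mainTheorem2 (R : realType) (N m : nat) (Sigma : set 'cV[R]_N)
  (A : 'M[R]_(m, N)) (xhat : 'cV[R]_N) (e : 'cV[R]_m) (mu lam eta : R)
  (P : 'cV[R]_N -> set 'cV[R]_N) :
  proximinal Sigma -> Sigma xhat -> 0 < mu -> 0 <= lam -> lam <= 1 -> 0 <= eta ->
  gen_proj Sigma P ->
  (exists b, rlip_ok Sigma P b) ->
  (forall z u, P z u -> exists w, orth_proj Sigma z w /\ norm2 (u - w) <= eta) ->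
  forall (x p : 'cV[R]_N), P x p ->
  let y := A *m xhat + e in
  let B := mu *: (A^T *m A) in
  let delta := rip_const Sigma B in
  let beta := rlip_const Sigma P in
  let z := (1 - lam) *: x + lam *: p in
  let xplus := z - mu *: (A^T *m (A *m z - y)) in
  norm2 (xplus - xhat) <=
    (delta * beta + `|1 - lam| * opnorm (1%:M - B)) * norm2 (x - xhat)
    + `|1 - lam| * opnorm (1%:M - B) * eta + mu * norm2 (A^T *m e).
Proof.
move=> _ Sxhat mu_gt0 _ _ _ PSigma lipP near_orth x p Pxp /=.
rewrite relaxed_step_decomp /=.
set B := mu *: _; set M := 1%:M - B; set d := norm2 (x - xhat).
have Sp : Sigma p by exact: (PSigma x).1.
have [w [wx pw]] := near_orth x p Pxp.
have hp : norm2 (M *m (p - xhat)) <= rip_const Sigma B * rlip_const Sigma P * d.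
  rewrite -mulrA; apply: le_trans (rip_const_bound _ Sp Sxhat) _.
  by rewrite ler_wpM2l ?rip_const_ge0 // (rlip_const_bound lipP Sxhat Pxp).
have hx : norm2 (x - p) <= d + eta.
  rewrite norm2_distC in pw; have := orth_proj_dist_le p wx Sxhat; rewrite -/d; lra.
have hxp : `|1 - lam| * norm2 (M *m (x - p)) <=
    `|1 - lam| * opnorm M * d + `|1 - lam| * opnorm M * eta.
  rewrite -mulrDr -mulrA ler_wpM2l //; apply: le_trans (norm2_mulmx_opnorm _ _) _.
  by rewrite ler_wpM2l ?opnorm_ge0.
apply: le_trans (norm2D _ _) _; rewrite norm2Z gtr0_norm //.
apply: le_trans (lerD (norm2D _ _) (lexx _)) _; rewrite norm2Z.
by rewrite lerD2r mulrDl -addrA lerD.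
Qed.
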